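(* Let $r\ge 2$ and consider the $\mathfrak{q}(2)$-crystal $\mathbf{B}^{\otimes r}$. Then the $\mathfrak{q}(2)$-connected component $C(1^r)$ of $1^r=1\otimes\cdots\otimes 1$ decomposes, as $\mathfrak{gl}_2$-crystals, as $$C(1^r)=C_{\mathfrak{gl}_2}(1^r)\sqcup C_{\mathfrak{gl}_2}(1^{r-1}2)\cong C_{\mathfrak{gl}_2}(1^{r-1})\otimes \mathbf{B}_{\mathfrak{gl}_2},$$ where $C_{\mathfrak{gl}_2}(1^{r-1})$ is the $\mathfrak{gl}_2$-connected component of $1^{r-1}$ in $\mathbf{B}^{\otimes (r-1)}$, $\mathbf B_{\mathfrak{gl}_2}$ is $\mathbf B$ regarded as a $\mathfrak{gl}_2$-crystal, and $\otimes$ on the right is the tensor product of $\mathfrak{gl}_2$-crystals.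
   Context: Let $P=\mathbb Z e_1\oplus\mathbb Z e_2$, $\alpha_1=e_1-e_2$, and $(k_1,k_2)$ the dual basis of $P^*$ with pairing $\langle\,,\rangle$. A $\mathfrak{gl}_2$-crystal is a set $B$ with maps $\tilde e,\tilde f:B\to B\sqcup\{0\}$, $\varphi,\varepsilon:B\to\mathbb Z\sqcup\{-\infty\}$, $\mathrm{wt}:B\to P$ such that: $\mathrm{wt}(\tilde e b)=\mathrm{wt}(b)+\alpha_1$ if $\tilde eb\ne0$; $\mathrm{wt}(\tilde f b)=\mathrm{wt}(b)-\alpha_1$ if $\tilde fb\neq 0$; $\varphi(b)=\varepsilon(b)+\langle k_1-k_2,\mathrm{wt}(b)\rangle$; $\tilde f b=b'$ iff $b=\tilde e b'$; if $\tilde e b\ne 0$ then $\varepsilon(\tilde eb)=\varepsilon(b)-1$, $\varphi(\tilde e b)=\varphi(b)+1$; if $\tilde fb\ne0$ then $\varepsilon(\tilde fb)=\varepsilon(b)+1$, $\varphi(\tilde fb)=\varphi(b)-1$; if $\varphi(b)=-\infty$ then $\tilde eb=\tilde fb=0$. A $\mathfrak q(2)$-crystal is a $\mathfrak{gl}_2$-crystal with extra maps $\tilde e_{\bar1},\tilde f_{\bar1}:B\to B\sqcup\{0\}$ such that $\mathrm{wt}(B)\subset \mathbb Z_{\ge0}e_1\oplus\mathbb Z_{\ge0}e_2$, $\mathrm{wt}(\tilde e_{\bar1}b)=\mathrm{wt}(b)+\alpha_1$, $\mathrm{wt}(\tilde f_{\bar1}b)=\mathrm{wt}(b)-\alpha_1$,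 and $\tilde f_{\bar1}b=b'$ iff $b=\tilde e_{\bar1}b'$. The tensor product $B_1\otimes B_2$ of $\mathfrak q(2)$-crystals is the set $B_1\times B_2$ with $\mathrm{wt}(b_1\otimes b_2)=\mathrm{wt}(b_1)+\mathrm{wt}(b_2)$, $\varepsilon(b_1\otimes b_2)=\max\{\varepsilon(b_1)-\varphi(b_1)+\varepsilon(b_2),\varepsilon(b_1)\}$, $\varphi(b_1\otimes b_2)=\max\{\varphi(b_1)-\varepsilon(b_2)+\varphi(b_2),\varphi(b_2)\}$, $\tilde e(b_1\otimes b_2)=\tilde eb_1\otimes b_2$ if $\varphi(b_1)\ge\varepsilon(b_2)$ and $=b_1\otimes\tilde e b_2$ otherwise; $\tilde f(b_1\otimes b_2)=\tilde fb_1\otimes b_2$ if $\varphi(b_1)>\varepsilon(b_2)$ and $=b_1\otimes \tilde fb_2$ otherwise; $\tilde e_{\bar1}(b_1\otimes b_2)=\tilde e_{\bar1}b_1\otimes b_2$ and $\tilde f_{\bar1}(b_1\otimes b_2)=\tilde f_{\bar1}b_1\otimes b_2$ if $\langle k_1,\mathrm{wt}(b_2)\rangle=\langle k_2,\mathrm{wt}(b_2)\rangle=0$, and otherwise they act on $b_2$ (with $x\otimes 0=0\otimes x=0$). The tensor product of $\mathfrak{gl}_2$-crystals is given by the same formulas for $\mathrm{wt},\varepsilon,\varphi,\tilde e,\tilde f$. Let $\mathbf B=\{1,2\}$ with $\mathrm{wt}(1)=e_1$, $\mathrm{wt}(2)=e_2$, $\tilde f(1)=2$, $\tilde e(2)=1$,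 $\tilde e(1)=\tilde f(2)=0$, $\varepsilon(1)=0,\varphi(1)=1,\varepsilon(2)=1,\varphi(2)=0$, $\tilde f_{\bar1}(1)=2$, $\tilde e_{\bar1}(2)=1$, $\tilde e_{\bar 1}(1)=\tilde f_{\bar1}(2)=0$. Elements $a_1\otimes\cdots\otimes a_r$ of $\mathbf B^{\otimes r}$ are written as words $a_1\cdots a_r$; $1^r$ denotes $r$ letters $1$, and $1^{r-1}2$ is the word with $r-1$ ones followed by a $2$. For $b$ in a $\mathfrak q(2)$-crystal, $C(b)$ is the connected component of $b$ in the graph with edges $b\to\tilde f b$ and $b\to\tilde f_{\bar1}b$; $C_{\mathfrak{gl}_2}(b)$ is the connected component using only edges $b\to \tilde fb$. *)

From HB Require Import structures.
From mathcomp Require Import all_boot all_order all_algebra.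
From Stdlib Require Import Relations.
Set Implicit Arguments. Unset Strict Implicit. Unset Printing Implicit Defensive.
Import Order.TTheory GRing.Theory Num.Theory.
Local Open Scope ring_scope.

(* Letters of B = {1,2}: [false] encodes the letter 1, [true] the letter 2.
   Weights in P = Z e1 (+) Z e2 are pairs (coefficient of e1, coefficient of e2). *)
Definition weight := (int * int)%type.
Definition addw (x y : weight) : weight := (x.1 + y.1, x.2 + y.2).

Definition wtB (a : bool) : weight := if a then (0, 1) else (1, 0).
Definition epsB (a : bool) : int := if a then 1 else 0.
Definition phiB (a : bool) : int := if a then 0 else 1.
Definition eB (a : bool) : option bool := if a then Some false else None.
Definition fB (a : bool) : option bool := if a then None else Some true.
Definition ebarB (a : bool) : option bool := if a then Some false else None.
Definition fbarB (a : bool) : option bool := if a then None else Some true.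

Definition tens_eps (e1 p1 e2 : int) : int := Num.max (e1 - p1 + e2) e1.
Definition tens_phi (p1 e2 p2 : int) : int := Num.max (p1 - e2 + p2) p2.

(* The crystal B^{(x) r}: a word a_1 ... a_r is a_1 (x) (a_2 ... a_r). *)
Fixpoint wtW (w : seq bool) : weight :=
  match w with
  | [::] => (0, 0)
  | a :: w' => addw (wtB a) (wtW w')
  end.

Fixpoint epsW (w : seq bool) : int :=
  match w with
  | [::] => 0
  | [:: a] => epsB a
  | a :: w' => tens_eps (epsB a) (phiB a) (epsW w')
  end.

Fixpoint phiW (w : seq bool) : int :=
  match w with
  | [::] => 0
  | [:: a] => phiB a
  | a :: w' => tens_phi (phiB a) (epsW w') (phiW w')
  end.

Fixpoint eW (w : seq bool) : option (seq bool) :=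
  match w with
  | [::] => None
  | [:: a] => omap (fun b => [:: b]) (eB a)
  | a :: w' => if epsW w' <= phiB a then omap (fun b => b :: w') (eB a)
               else omap (cons a) (eW w')
  end.

Fixpoint fW (w : seq bool) : option (seq bool) :=
  match w with
  | [::] => None
  | [:: a] => omap (fun b => [:: b]) (fB a)
  | a :: w' => if epsW w' < phiB a then omap (fun b => b :: w') (fB a)
               else omap (cons a) (fW w')
  end.

Fixpoint ebarW (w : seq bool) : option (seq bool) :=
  match w with
  | [::] => None
  | [:: a] => omap (fun b => [:: b]) (ebarB a)
  | a :: w' => if wtW w' == (0, 0) then omap (fun b => b :: w') (ebarB a)
               else omap (cons a) (ebarW w')
  end.

Fixpoint fbarW (w : seq bool) : option (seq bool) :=
  match w with
  | [::] => None
  | [:: a] => omap (fun b => [:: b]) (fbarB a)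
  | a :: w' => if wtW w' == (0, 0) then omap (fun b => b :: w') (fbarB a)
               else omap (cons a) (fbarW w')
  end.

Definition gl2_edge (x y : seq bool) : Prop := fW x = Some y.
Definition q2_edge (x y : seq bool) : Prop := fW x = Some y \/ fbarW x = Some y.

Definition Cgl2 (b w : seq bool) : Prop := clos_refl_sym_trans _ gl2_edge b w.
Definition Cq2 (b w : seq bool) : Prop := clos_refl_sym_trans _ q2_edge b w.

(* gl_2-crystal tensor product B^{(x)(r-1)} (x) B_gl2 on pairs (u, a) = u (x) a. *)
Definition wtT (p : seq bool * bool) : weight := addw (wtW p.1) (wtB p.2).
Definition epsT (p : seq bool * bool) : int := tens_eps (epsW p.1) (phiW p.1) (epsB p.2).
Definition phiT (p : seq bool * bool) : int := tens_phi (phiW p.1) (epsB p.2) (phiB p.2).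
Definition eT (p : seq bool * bool) : option (seq bool * bool) :=
  if epsB p.2 <= phiW p.1 then omap (fun u => (u, p.2)) (eW p.1)
  else omap (fun b => (p.1, b)) (eB p.2).
Definition fT (p : seq bool * bool) : option (seq bool * bool) :=
  if epsB p.2 < phiW p.1 then omap (fun u => (u, p.2)) (fW p.1)
  else omap (fun b => (p.1, b)) (fB p.2).

Definition gl2_iso (D : seq bool * bool -> Prop) (S : seq bool -> Prop)
    (psi : seq bool * bool -> seq bool) : Prop :=
  [/\ (forall p q, D p -> D q -> psi p = psi q -> p = q),
      (forall w, S w <-> exists2 p, D p & psi p = w),
      (forall p, D p -> wtW (psi p) = wtT p /\ epsW (psi p) = epsT p /\ phiW (psi p) = phiT p)
    & (forall p, D p -> eW (psi p) = omap psi (eT p) /\ fW (psi p) = omap psi (fT p))].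

(* The q(2)-operators act on the last letter only, since every nonempty suffix has
   nonzero weight, and there they swap 1 and 2.  The gl_2-component of [1^n] consists of
   the words [2^k 1^m] with [k + m = n], that of [1^(n-1) 2] of the words [2^k 1^(m+1) 2];
   their union is the set of words [u a] with [u] in the gl_2-component of [1^(n-1)], which
   is closed under changing the last letter, hence is the q(2)-component of [1^n].  The two
   gl_2-components are disjoint because [eps + phi] differs on them, and [u (x) a |-> u a]
   is a gl_2-crystal isomorphism by associativity of the tensor product. *)

From mathcomp Require Import all_boot all_order all_algebra zify.
From Stdlib Require Import Relations.
Import Order.TTheory GRing.Theory Num.Theory.
Set Implicit Arguments. Unset Strict Implicit. Unset Printing Implicit Defensive.
Local Open Scope ring_scope.

Lemma epsW_cons a w : epsW (a :: w) = tens_eps (epsB a) (phiB a) (epsW w).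
Proof. by case: w => [|b w] //; case: a. Qed.

Lemma phiW_cons a w : phiW (a :: w) = tens_phi (phiB a) (epsW w) (phiW w).
Proof. by case: w => [|b w] //; case: a. Qed.

Lemma eW_cons a w : eW (a :: w) =
  if epsW w <= phiB a then omap (fun b => b :: w) (eB a) else omap (cons a) (eW w).
Proof. by case: w => [|b w] //; case: a. Qed.

Lemma fW_cons a w : fW (a :: w) =
  if epsW w < phiB a then omap (fun b => b :: w) (fB a) else omap (cons a) (fW w).
Proof. by case: w => [|b w] //; case: a. Qed.

Lemma epsW_ge0 w : 0 <= epsW w.
Proof. by elim: w => [|a w IH] //; rewrite epsW_cons /tens_eps; case: a => /=; lia. Qed.

Lemma eW_fW w y : fW w = Some y -> eW y = Some w.
Proof.
suff: fW w = Some y -> eW y = Some w /\ epsW y = epsW w + 1 by move=> H /H [].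
elim: w y => [|a w IH] y //; have eps_ge0 := epsW_ge0 w.
rewrite fW_cons; case: ifP => [|eps_ge_phi].
  case: a => // eps_lt1 [<-]; rewrite /= in eps_lt1.
  have eps0 : epsW w = 0 by lia.
  by rewrite eW_cons !epsW_cons eps0.
case fw: (fW w) => [y'|] // [<-]; have [e_y' eps_y'] := IH _ fw.
rewrite eW_cons e_y' !epsW_cons eps_y' ifF /tens_eps; first by split => //; lia.
by move: eps_ge_phi; case: a => /=; lia.
Qed.

(* Words are tensored from the left; associativity of the tensor product makes the
   word [rcons u a] the crystal element [u (x) a]. *)
Lemma wtW_rcons u a : wtW (rcons u a) = addw (wtW u) (wtB a).
Proof.
elim: u => [|b u IH] /=; first by rewrite /addw /= !add0r !addr0; case: (wtB a).
by rewrite IH /addw /= !addrA.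
Qed.

Lemma epsW_rcons u a : epsW (rcons u a) = tens_eps (epsW u) (phiW u) (epsB a).
Proof.
elim: u => [|b u IH]; first by rewrite /tens_eps; case: a => /=; lia.
by rewrite rcons_cons !epsW_cons phiW_cons IH /tens_eps /tens_phi; lia.
Qed.

Lemma phiW_rcons u a : phiW (rcons u a) = tens_phi (phiW u) (epsB a) (phiB a).
Proof.
elim: u => [|b u IH]; first by rewrite /tens_phi; case: a => /=; lia.
by rewrite rcons_cons !phiW_cons epsW_rcons IH /tens_eps /tens_phi; lia.
Qed.

Lemma eW_rcons u a : eW (rcons u a) = omap (fun p => rcons p.1 p.2) (eT (u, a)).
Proof.
elim: u => [|b u IH]; first by case: a.
rewrite rcons_cons eW_cons IH /eT; cbn [fst snd].
rewrite phiW_cons eW_cons epsW_rcons /tens_eps /tens_phi.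
by repeat case: ifP => ?; try lia; case: (eB b) => //; case: (eW u) => //; case: (eB a).
Qed.

Lemma fW_rcons u a : fW (rcons u a) = omap (fun p => rcons p.1 p.2) (fT (u, a)).
Proof.
elim: u => [|b u IH]; first by case: a.
rewrite rcons_cons fW_cons IH /fT; cbn [fst snd].
rewrite phiW_cons fW_cons epsW_rcons /tens_eps /tens_phi.
by repeat case: ifP => ?; try lia; case: (fB b) => //; case: (fW u) => //; case: (fB a).
Qed.

Lemma clos_rst_invariant (T : Type) (R : relation T) (P : T -> Prop) :
  (forall x y, R x y -> P x <-> P y) ->
  forall x y, clos_refl_sym_trans T R x y -> P x -> P y.
Proof.
move=> RP x y xy; suff: P x <-> P y by case.
elim: xy => [x' y' /RP //|//|x' y' _|x' y' z' _ + _]; tauto.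
Qed.

Definition gl2_closed (P : seq bool -> Prop) := forall x y, fW x = Some y -> P x <-> P y.

Lemma Cgl2_iff_closed (P : seq bool -> Prop) b : gl2_closed P -> P b ->
  (forall w, P w -> Cgl2 b w) -> forall w, Cgl2 b w <-> P w.
Proof.
move=> closedP Pb reachP w; split=> [bw|/reachP //].
exact: clos_rst_invariant closedP _ _ bw Pb.
Qed.

Lemma Cgl2_Cq2 b w : Cgl2 b w -> Cq2 b w.
Proof.
elim=> [x y fxy|x|x y _|x y z _ bx _].
- by apply: rst_step; left.
- exact: rst_refl.
- exact: rst_sym.
- exact: rst_trans bx.
Qed.

Definition w21 k m : seq bool := nseq k true ++ nseq m false.
Definition w212 k m : seq bool := rcons (w21 k m) true.

Arguments w21 : simpl never.

Lemma w21S k m : w21 k.+1 m = true :: w21 k m. Proof. by []. Qed.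
Lemma w210S m : w21 0 m.+1 = false :: w21 0 m. Proof. by []. Qed.

Lemma w21_rcons1 k m : w21 k m.+1 = rcons (w21 k m) false.
Proof. by rewrite /w21 -cats1 -catA; congr (_ ++ _); elim: m => //= m ->. Qed.

Lemma w21_rcons2 k : w21 k.+1 0 = rcons (w21 k 0) true.
Proof. by rewrite /w21 !cats0; elim: k => //= k ->. Qed.

Lemma epsW_phiW_w21 k m : epsW (w21 k m) = k%:Z /\ phiW (w21 k m) = m%:Z.
Proof.
elim: k => [|k [eps_k phi_k]].
  elim: m => [|m [eps_m phi_m]] //.
  by rewrite w210S epsW_cons phiW_cons eps_m phi_m /tens_eps /tens_phi /=; lia.
by rewrite w21S epsW_cons phiW_cons eps_k phi_k /tens_eps /tens_phi /=; lia.
Qed.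

Lemma epsW_w21 k m : epsW (w21 k m) = k%:Z. Proof. by case: (epsW_phiW_w21 k m). Qed.
Lemma phiW_w21 k m : phiW (w21 k m) = m%:Z. Proof. by case: (epsW_phiW_w21 k m). Qed.

Lemma fW_w21 k m : fW (w21 k m) = if m is m'.+1 then Some (w21 k.+1 m') else None.
Proof.
elim: k => [|k IH]; first by case: m => [|m] //; rewrite w210S fW_cons epsW_w21.
by rewrite w21S fW_cons epsW_w21 IH /=; case: m {IH}.
Qed.

Lemma eW_w21 k m : eW (w21 k m) = if k is k'.+1 then Some (w21 k' m.+1) else None.
Proof.
elim: k => [|k IH]; first by case: m => [|m] //; rewrite w210S eW_cons epsW_w21.
by rewrite w21S eW_cons epsW_w21 IH /=; case: k {IH}.
Qed.

Lemma epsW_w212 k m : epsW (w212 k m.+1) = k%:Z.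
Proof. by rewrite epsW_rcons epsW_w21 phiW_w21 /tens_eps /=; lia. Qed.

Lemma phiW_w212 k m : phiW (w212 k m.+1) = m%:Z.
Proof. by rewrite phiW_rcons phiW_w21 /tens_phi /=; lia. Qed.

Lemma fW_w212 k m : fW (w212 k m.+1) = if m is m'.+1 then Some (w212 k.+1 m) else None.
Proof. by rewrite fW_rcons /fT phiW_w21 fW_w21; case: m. Qed.

Lemma eW_w212 k m : eW (w212 k m.+1) = if k is k'.+1 then Some (w212 k' m.+2) else None.
Proof. by rewrite eW_rcons /eT phiW_w21 eW_w21 /=; case: k. Qed.

Definition comp21 n w := exists k m, (k + m)%N = n /\ w = w21 k m.
Definition comp212 n w := exists k m, (k + m + 2)%N = n /\ w = w212 k m.+1.

Lemma comp21_closed n : gl2_closed (comp21 n).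
Proof.
move=> x y fxy; split=> [[k [m [<- xE]]]|[k [m [<- yE]]]].
  move: fxy; rewrite {x}xE fW_w21; case: m => // m [<-].
  by exists k.+1, m; rewrite addSnnS.
move: (eW_fW fxy); rewrite {y fxy}yE eW_w21; case: k => // k [<-].
by exists k, m.+1; rewrite addSnnS.
Qed.

Lemma comp212_closed n : gl2_closed (comp212 n).
Proof.
move=> x y fxy; split=> [[k [m [<- xE]]]|[k [m [<- yE]]]].
  move: fxy; rewrite {x}xE fW_w212; case: m => // m [<-].
  by exists k.+1, m; split=> //; lia.
move: (eW_fW fxy); rewrite {y fxy}yE eW_w212; case: k => // k [<-].
by exists k, m.+1; split=> //; lia.
Qed.

Lemma Cgl2_w21 k m : Cgl2 (w21 0 (k + m)) (w21 k m).
Proof.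
elim: k m => [|k IH] m; first exact: rst_refl.
rewrite addSnnS; apply: (rst_trans _ _ _ _ _ (IH m.+1)).
by apply: rst_step; rewrite /gl2_edge fW_w21.
Qed.

Lemma Cgl2_w212 k m : Cgl2 (w212 0 (k + m).+1) (w212 k m.+1).
Proof.
elim: k m => [|k IH] m; first exact: rst_refl.
rewrite addSnnS; apply: (rst_trans _ _ _ _ _ (IH m.+1)).
by apply: rst_step; rewrite /gl2_edge fW_w212.
Qed.

Lemma Cgl2_comp21 n w : Cgl2 (nseq n false) w <-> comp21 n w.
Proof.
apply: Cgl2_iff_closed => [|//|_ [k [m [<- ->]]]]; first exact: comp21_closed.
- by exists 0%N, n.
- exact: Cgl2_w21.
Qed.

Lemma Cgl2_comp212 n w : (2 <= n)%N ->
  Cgl2 (rcons (nseq n.-1 false) true) w <-> comp212 n w.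
Proof.
move=> n_ge2; have -> : n.-1 = (n - 2).+1 by lia.
apply: Cgl2_iff_closed => [|//|_ [k [m [<- ->]]]]; first exact: comp212_closed.
- by exists 0%N, (n - 2)%N; split=> //; lia.
- by rewrite addnK; exact: Cgl2_w212.
Qed.

Lemma comp21_or_comp212_rcons n w : (0 < n)%N ->
  comp21 n w \/ comp212 n w <-> exists2 p, comp21 n.-1 p.1 & rcons p.1 p.2 = w.
Proof.
move=> n_gt0; split.
  case=> -[k [m [nE ->]]]; subst n.
    case: m n_gt0 => [|m] n_gt0.
      case: k n_gt0 => [//|k _].
      exists (w21 k 0, true); last by rewrite w21_rcons2.
      by exists k, 0%N; split=> //; lia.
    exists (w21 k m, false); last by rewrite w21_rcons1.
    by exists k, m; split=> //; lia.
  by exists (w21 k m.+1, true) => //; exists k, m.+1; split=> //; lia.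
case=> [[u []]] /= [k [m [km ->]]] <-.
  case: m km => [|m] km.
    by left; exists k.+1, 0%N; rewrite w21_rcons2; split=> //; lia.
  by right; exists k, m; split=> //; lia.
by left; exists k, m.+1; rewrite w21_rcons1; split=> //; lia.
Qed.

(* [epsW + phiW] is [n] on [comp21 n] but [n - 2] on [comp212 n]. *)
Lemma comp21_comp212_disjoint n w : comp21 n w -> comp212 n w -> False.
Proof.
move=> [k [m [<- ->]]] [k' [m' [km wE]]].
have := congr1 epsW wE; have := congr1 phiW wE.
by rewrite epsW_w21 phiW_w21 epsW_w212 phiW_w212; lia.
Qed.

Lemma wtW_size w : (wtW w).1 + (wtW w).2 = (size w)%:Z.
Proof. by elim: w => [|a w IH] //=; rewrite /addw /=; case: a => /=; lia. Qed.

Lemma fbarW_rcons u a : fbarW (rcons u a) = if a then None else Some (rcons u true).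
Proof.
elim: u => [|b u IH]; first by case: a.
rewrite rcons_cons /=; case uaE: (rcons u a) => [|c t].
  by move/(congr1 size): uaE; rewrite size_rcons.
have -> : (wtW (c :: t) == (0, 0)) = false.
  by apply/negbTE/eqP => wt0; move: (wtW_size (c :: t)); rewrite wt0 /=; lia.
by rewrite -uaE IH; case: (a).
Qed.

Lemma fbarW_Some w y : fbarW w = Some y -> exists u, w = rcons u false /\ y = rcons u true.
Proof. by case/lastP: w => [|u a] //; rewrite fbarW_rcons; case: a => // [[<-]]; exists u. Qed.

Lemma Cq2_nseq n w : (0 < n)%N -> Cq2 (nseq n false) w <-> comp21 n w \/ comp212 n w.
Proof.
move=> n_gt0; split=> [bw|].
  apply: (clos_rst_invariant (P := fun w => comp21 n w \/ comp212 n w) _ bw);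
    last by left; exists 0%N, n.
  move=> x y [fxy|/fbarW_Some [u [-> ->]]].
    by have := comp21_closed n fxy; have := comp212_closed n fxy; tauto.
  rewrite !comp21_or_comp212_rcons //.
  by split=> -[[v b] /= Cv /rcons_inj [vu _]]; subst v; [exists (u, true)|exists (u, false)].
case=> [/Cgl2_comp21/Cgl2_Cq2 //|[k [m [<- ->]]]].
apply: (rst_trans _ _ _ _ _ _ (Cgl2_Cq2 (Cgl2_w212 k m))); apply: rst_step; right.
by rewrite addn2 -[nseq _ false]/(w21 0 _) w21_rcons1 fbarW_rcons.
Qed.

Theorem proposition3p4 (r : nat) (hr : (2 <= r)%N) :
  [/\ (forall w, Cq2 (nseq r false) w <->
                 Cgl2 (nseq r false) w \/ Cgl2 (rcons (nseq r.-1 false) true) w),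
      (forall w, ~ (Cgl2 (nseq r false) w /\ Cgl2 (rcons (nseq r.-1 false) true) w))
    & exists psi, gl2_iso (fun p => Cgl2 (nseq r.-1 false) p.1) (Cq2 (nseq r false)) psi].
Proof.
have r_gt0 : (0 < r)%N by lia.
split.
- by move=> w; rewrite Cq2_nseq // Cgl2_comp21 Cgl2_comp212.
- by move=> w [/Cgl2_comp21 + /(Cgl2_comp212 _ hr)]; apply: comp21_comp212_disjoint.
exists (fun p => rcons p.1 p.2); split.
- by move=> [u a] [v b] _ _ /rcons_inj [-> ->].
- move=> w; rewrite Cq2_nseq // comp21_or_comp212_rcons //.
  by split=> -[p ? ?]; exists p => //; apply/Cgl2_comp21.
- by move=> [u a] _; rewrite wtW_rcons epsW_rcons phiW_rcons.
- by move=> [u a] _; rewrite eW_rcons fW_rcons.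
Qed.
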